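(* Let $D$ be a Dedekind domain with quotient field $K$, $M$ a maximal ideal of $D$ of finite index, $\hat D$ the $M$-adic completion of $D$, $n\ge1$, and $C\in M_n(\hat D)$. Then $\{f(C)\mid f\in\mathrm{Int}_K(M_n(D))\}\subseteq \hat D[C]=\{s(C)\mid s\in\hat D[x]\}$.
   Context: $\mathrm{Int}_K(M_n(D))=\{f\in K[x]\mid f(C)\in M_n(D)\text{ for all }C\in M_n(D)\}$. For $f=g/d$ with $g\in D[x]$, $d\in D\setminus\{0\}$ and $C\in M_n(\hat D)$, $f(C)=d^{-1}g(C)$ computed over the quotient field of $\hat D$. *)

From HB Require Import structures.
From mathcomp Require Import all_boot all_order all_algebra.
Set Implicit Arguments. Unset Strict Implicit. Unset Printing Implicit Defensive.
Import Order.TTheory GRing.Theory Num.Theory.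
Local Open Scope ring_scope.

Definition is_ideal (D : comRingType) (I : D -> Prop) : Prop :=
  [/\ I 0, (forall x y, I x -> I y -> I (x + y)) & (forall a x, I x -> I (a * x))].

Definition in_span (D : comRingType) (s : seq D) (x : D) : Prop :=
  exists c : seq D, size c = size s /\ x = \sum_(i < size s) c`_i * s`_i.

Definition prime_ideal (D : comRingType) (I : D -> Prop) : Prop :=
  [/\ is_ideal I, ~ I 1 & forall a b, I (a * b) -> I a \/ I b].

Definition maximal_ideal (D : comRingType) (I : D -> Prop) : Prop :=
  [/\ is_ideal I, ~ I 1 &
      forall J : D -> Prop, is_ideal J -> (forall x, I x -> J x) ->
        (forall x, J x -> I x) \/ J 1].

Definition noetherian (D : comRingType) : Prop :=
  forall I : D -> Prop, is_ideal I ->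
    exists s : seq D, (forall i, (i < size s)%N -> I s`_i) /\
                      (forall x, I x <-> in_span s x).

Definition integrally_closed (D : idomainType) : Prop :=
  forall (x : {fraction D}) (p : {poly D}),
    p \is monic -> root (map_poly (@tofrac D) p) x -> exists a : D, x = tofrac a.

Definition dedekind (D : idomainType) : Prop :=
  [/\ noetherian D, integrally_closed D &
      forall P : D -> Prop, prime_ideal P -> (exists x, P x /\ x != 0) -> maximal_ideal P].

Definition finite_index (D : comRingType) (M : D -> Prop) : Prop :=
  exists reps : seq D, forall x, exists2 r, r \in reps & M (x - r).

Fixpoint ideal_pow (D : comRingType) (M : D -> Prop) (k : nat) : D -> Prop :=
  match k with
  | 0 => fun _ => True
  | k'.+1 => fun x => exists a b : seq D,
      [/\ size a = size b,
          forall i, (i < size a)%N -> M a`_i,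
          forall i, (i < size a)%N -> ideal_pow M k' b`_i &
          x = \sum_(i < size a) a`_i * b`_i]
  end.

Definition mx_eval (R : comRingType) (n : nat) (p : {poly R}) (A : 'M[R]_n) : 'M[R]_n :=
  \sum_(i < size p) p`_i *: A ^+ i.

(* f in Int_K(M_n(D)) for f in K[x], K = {fraction D} *)
Definition int_valued_mx (D : idomainType) (n : nat) (f : {poly {fraction D}}) : Prop :=
  forall C : 'M[D]_n, exists B : 'M[D]_n,
    mx_eval f (map_mx (@tofrac D) C) = map_mx (@tofrac D) B.

(* An n x n matrix over D^: a sequence (C_k)_k of matrices over D with
   C_{k+1} = C_k mod M^k entrywise (C_k represents the image in M_n(D/M^k)). *)
Definition completion_mx (D : comRingType) (M : D -> Prop) (n : nat)
    (C : nat -> 'M[D]_n) : Prop :=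
  forall k i j, ideal_pow M k (C k.+1 i j - C k i j).

(* A polynomial over D^ of size <= N: a coherent sequence of polynomials over D. *)
Definition completion_poly (D : comRingType) (M : D -> Prop) (N : nat)
    (s : nat -> {poly D}) : Prop :=
  (forall k, (size (s k) <= N)%N) /\
  (forall k i, ideal_pow M k ((s k.+1)`_i - (s k)`_i)).

From HB Require Import structures.
From mathcomp Require Import all_boot all_order all_algebra.
From mathcomp Require Import ring.
From Stdlib Require Import Classical ClassicalEpsilon.
Set Implicit Arguments. Unset Strict Implicit. Unset Printing Implicit Defensive.
Import Order.TTheory GRing.Theory Num.Theory.
Local Open Scope ring_scope.

(* For f = g/d integer-valued on M_n(D) and C in M_n(D^) we find s in D^[x]
   with g(C) = d s(C), working modulo every M^k with the coherent
   approximations C_k of C.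

   Let chi_k be the characteristic polynomial of C_k and
   r_k := g mod chi_k, so g(C_k) = r_k(C_k) by Cayley-Hamilton.  Evaluating
   f at the companion matrix of chi_k, whose first row reads off the
   coefficients of remainders mod chi_k, shows r_k = d t_k with t_k in D[x].
   Since C_{k+1} = C_k mod M^k, also chi_{k+1} = chi_k and r_{k+1} = r_k
   mod M^k.  The Dedekind hypothesis enters only to bound the loss of
   M-adic order under division by d: M is locally principal
   (s M in pi D with s outside M), and Krull's intersection theorem bounds
   the pi-adic order e of d, so d x in M^(k+e) forces x in M^k.  Hence
   s_k := t_(k+e) is coherent and g(C_k) - d s_k(C_k) = (r_k - r_(k+e))(C_k)
   lies in M^k. *)

Section IdealCongruence.
Variables (R : comNzRingType) (I : R -> Prop).
Hypothesis hI : is_ideal I.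

Lemma ideal0 : I 0. Proof. by case: hI. Qed.

Lemma idealD x y : I x -> I y -> I (x + y).
Proof. by case: hI => _ H _; apply: H. Qed.

Lemma idealMl a x : I x -> I (a * x).
Proof. by case: hI => _ _ H; apply: H. Qed.

Lemma idealMr a x : I x -> I (x * a).
Proof. by rewrite mulrC; apply: idealMl. Qed.

Lemma idealN x : I x -> I (- x).
Proof. by move=> Ix; rewrite -mulN1r; apply: idealMl. Qed.

Lemma ideal_sum (J : Type) (r : seq J) (P : pred J) (F : J -> R) :
  (forall j, P j -> I (F j)) -> I (\sum_(j <- r | P j) F j).
Proof. by move=> IF; apply: (big_ind I) => //; [apply: ideal0 | apply: idealD]. Qed.

Lemma cong_refl x : I (x - x).
Proof. by rewrite subrr; apply: ideal0. Qed.

Lemma cong_add x y x' y' : I (x - x') -> I (y - y') -> I ((x + y) - (x' + y')).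
Proof. by move=> Hx Hy; rewrite opprD addrACA; apply: idealD. Qed.

Lemma cong_mul x y x' y' : I (x - x') -> I (y - y') -> I ((x * y) - (x' * y')).
Proof.
move=> Hx Hy; have -> : x * y - x' * y' = x * (y - y') + (x - x') * y'.
  by rewrite mulrBr mulrBl addrA subrK.
by apply: idealD; [apply: idealMl | apply: idealMr].
Qed.

(* The determinant is a polynomial in the entries. *)
Lemma det_cong n (P Q : 'M[R]_n) :
  (forall i j, I (P i j - Q i j)) -> I (\det P - \det Q).
Proof.
move=> PQ; apply: (big_ind2 (fun x y => I (x - y))).
- exact: cong_refl.
- by move=> *; apply: cong_add.
move=> s _; apply: cong_mul; first exact: cong_refl.
apply: (big_ind2 (fun x y => I (x - y))).
- exact: cong_refl.
- by move=> *; apply: cong_mul.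
by move=> i _; apply: PQ.
Qed.

Lemma mulmx_cong m n p (A A' : 'M[R]_(m, n)) (B B' : 'M[R]_(n, p)) :
  (forall i j, I (A i j - A' i j)) -> (forall i j, I (B i j - B' i j)) ->
  forall i j, I ((A *m B) i j - (A' *m B') i j).
Proof.
by move=> AA BB i j; rewrite !mxE -sumrB; apply: ideal_sum => k _; apply: cong_mul.
Qed.

Lemma exp_cong m (A A' : 'M[R]_m) k :
  (forall i j, I (A i j - A' i j)) -> forall i j, I ((A ^+ k) i j - (A' ^+ k) i j).
Proof.
move=> AA; elim: k => [|k IH] i j; first by rewrite !expr0; apply: cong_refl.
by rewrite !exprS; apply: mulmx_cong.
Qed.

End IdealCongruence.

Section IdealPowers.
Variables (R : comNzRingType) (M : R -> Prop).
Hypothesis hM : is_ideal M.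

Lemma ideal_pow_ideal k : is_ideal (ideal_pow M k).
Proof.
case: k => [|k] /=; first by split.
split.
- by exists [::], [::]; split => //=; rewrite big_ord0.
- move=> x y [a [b [sab Ma Mb ->]]] [a' [b' [sab' Ma' Mb' ->]]].
  exists (a ++ a'), (b ++ b'); split.
  + by rewrite !size_cat sab sab'.
  + move=> i; rewrite size_cat nth_cat => Hi; case: ltnP => Hia; first exact: Ma.
    by apply: Ma'; rewrite -(ltn_add2l (size a)) subnKC.
  + move=> i; rewrite size_cat nth_cat -sab => Hi; case: ltnP => Hia; first exact: Mb.
    by apply: Mb'; rewrite -(ltn_add2l (size a)) subnKC.
  + rewrite size_cat big_split_ord /=; congr (_ + _); apply: eq_bigr => i _.
      by rewrite !nth_cat ltn_ord -sab ltn_ord.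
    by rewrite !nth_cat -sab !ltnNge leq_addr /= !addKn.
- move=> c x [a [b [sab Ma Mb ->]]].
  exists [seq c * z | z <- a], b; split; rewrite ?size_map //.
  + by move=> i Hi; rewrite (nth_map 0) //; apply: (idealMl hM); apply: Ma.
  + by rewrite mulr_sumr; apply: eq_bigr => i _; rewrite (nth_map 0) // mulrA.
Qed.

Lemma ideal_pow_mul k m y : M m -> ideal_pow M k y -> ideal_pow M k.+1 (m * y).
Proof. by move=> Mm My; exists [:: m], [:: y]; split; rewrite ?big_ord1 //; case. Qed.

Lemma ideal_pow_exp k m : M m -> ideal_pow M k (m ^+ k).
Proof. by move=> Mm; elim: k => [//|k IH]; rewrite exprS; apply: ideal_pow_mul. Qed.

Lemma ideal_pow_mono j k x : (j <= k)%N -> ideal_pow M k x -> ideal_pow M j x.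
Proof.
have succ l y : ideal_pow M l.+1 y -> ideal_pow M l y.
  elim: l y => [//|l IH] y [a [b [sab Ma Mb ->]]].
  by exists a, b; split => // i Hi; apply: IH; apply: Mb.
move=> /subnK <-; elim: (k - j)%N x => [//|l IH] x Hx.
by apply: IH; apply: succ; rewrite -addSn.
Qed.

Lemma coherent_diff (x : nat -> R) :
  (forall k, ideal_pow M k (x k.+1 - x k)) ->
  forall k l, (k <= l)%N -> ideal_pow M k (x l - x k).
Proof.
move=> Hx k l /subnK <-; elim: (l - k)%N => [|q IH].
  by rewrite add0n; apply: (cong_refl (ideal_pow_ideal k)).
have -> : x (q.+1 + k)%N - x k = (x (q + k).+1 - x (q + k)%N) + (x (q + k)%N - x k).
  by rewrite addrA subrK.
apply: (idealD (ideal_pow_ideal k)) => //.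
exact: (ideal_pow_mono (leq_addl q k)).
Qed.

End IdealPowers.

Definition coef_in (R : comNzRingType) (I : R -> Prop) (p : {poly R}) : Prop :=
  forall i, I p`_i.

Lemma coef_in_ideal (R : comNzRingType) (I : R -> Prop) :
  is_ideal I -> is_ideal (coef_in I).
Proof.
move=> hI; split.
- by move=> i; rewrite coef0; apply: ideal0.
- by move=> p q Ip Iq i; rewrite coefD; apply: idealD.
- by move=> a p Ip i; rewrite coefM; apply: ideal_sum => // j _; apply: idealMl.
Qed.

Lemma horner_mx_sum (R : comNzRingType) m (A : 'M[R]_m.+1) (p : {poly R}) N :
  (size p <= N)%N -> horner_mx A p = \sum_(i < N) p`_i *: A ^+ i.
Proof.
move=> pN; have pE : p = \poly_(i < N) p`_i.
  apply/polyP => i; rewrite coef_poly; case: ltnP => // Ni.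
  by rewrite nth_default // (leq_trans pN Ni).
rewrite {1}pE poly_def rmorph_sum /=; apply: eq_bigr => i _.
by rewrite horner_mxZ rmorphXn /= horner_mx_X.
Qed.

Lemma mx_evalE (R : comNzRingType) m (A : 'M[R]_m.+1) (p : {poly R}) :
  mx_eval p A = horner_mx A p.
Proof. by rewrite (horner_mx_sum _ (leqnn _)). Qed.

Section HornerCongruence.
Variables (R : comNzRingType) (I : R -> Prop) (m : nat).
Hypothesis hI : is_ideal I.

Lemma horner_mx_in (A : 'M[R]_m.+1) (p : {poly R}) :
  coef_in I p -> forall i j, I (horner_mx A p i j).
Proof.
move=> Ip i j; rewrite (horner_mx_sum _ (leqnn _)) summxE.
by apply: ideal_sum => // k _; rewrite mxE; apply: idealMr.
Qed.

Lemma horner_mx_cong (A B : 'M[R]_m.+1) (p : {poly R}) :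
  (forall i j, I (A i j - B i j)) ->
  forall i j, I (horner_mx A p i j - horner_mx B p i j).
Proof.
move=> AB i j; rewrite !(horner_mx_sum _ (leqnn _)) !summxE -sumrB.
apply: ideal_sum => // k _; rewrite !mxE -mulrBr; apply: idealMl => //.
exact: exp_cong.
Qed.

Lemma char_poly_cong (A B : 'M[R]_m.+1) :
  (forall i j, I (A i j - B i j)) -> coef_in I (char_poly A - char_poly B).
Proof.
move=> AB; apply: det_cong; first exact: coef_in_ideal.
move=> i j k; rewrite !mxE coefB !coefD !coefN !coefC opprB addrC addrA subrK.
by case: eqP => _; [rewrite -opprB; apply: idealN | apply: cong_refl].
Qed.

End HornerCongruence.

Lemma horner_mx_modp_char (R : idomainType) m (A : 'M[R]_m.+1) (g : {poly R}) :
  horner_mx A (g %% char_poly A) = horner_mx A g.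
Proof.
rewrite [in RHS](Pdiv.IdomainMonic.divp_eq (char_poly_monic A) g).
by rewrite rmorphD rmorphM /= Cayley_Hamilton mulr0 add0r.
Qed.

(* The companion matrix of a monic p of degree m+1 (this is the library's
   companionmx p, indexed by m.+1 instead of (size p).-1): its first row
   turns polynomials into the coefficient rows of their remainders mod p. *)
Definition companion (R : nzRingType) (m : nat) (p : {poly R}) : 'M[R]_m.+1 :=
  \matrix_(i, j) if i == m :> nat then - p`_j else (i.+1 == j :> nat)%:R.

Section Companion.
Variables (R : idomainType) (m : nat) (p : {poly R}).
Hypotheses (p_monic : p \is monic) (p_size : size p = m.+2).

Let Cp := companion m p.
Let e (i : nat) : 'rV[R]_m.+1 := delta_mx 0 (inord i).

Lemma e_companion (i : nat) : (i < m)%N -> e i *m Cp = e i.+1.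
Proof.
move=> im; apply/rowP => j; rewrite !mxE (bigD1 (inord i)) //= big1 ?addr0.
  rewrite !mxE !eqxx mul1r inordK ?(ltn_trans im) // (ltn_eqF im).
  by rewrite -val_eqE /= inordK ?ltnS // eq_sym.
by move=> k /negPf kN; rewrite !mxE kN mul0r.
Qed.

Lemma e_companion_last : e m *m Cp = - \row_j p`_j.
Proof.
apply/rowP => j; rewrite !mxE (bigD1 (inord m)) //= big1 ?addr0.
  by rewrite !mxE !eqxx mul1r inordK // eqxx.
by move=> k /negPf kN; rewrite !mxE kN mul0r.
Qed.

Lemma e0_companion_exp (k : nat) : (k <= m)%N -> e 0 *m Cp ^+ k = e k.
Proof.
elim: k => [|k IH] km; first by rewrite expr0 mulmx1.
by rewrite exprSr mulmxA IH ?(ltnW km) // e_companion.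
Qed.

Lemma sum_e (r : {poly R}) : \sum_(i < m.+1) r`_i *: e i = \row_j r`_j.
Proof.
apply/rowP => j; rewrite summxE (bigD1 j) //= big1 ?addr0.
  by rewrite !mxE inord_val !eqxx mulr1.
by move=> k kj; rewrite !mxE inord_val eq_sym (negPf kj) mulr0.
Qed.

Lemma e0_horner_small (r : {poly R}) : (size r <= m.+1)%N ->
  e 0 *m horner_mx Cp r = \row_j r`_j.
Proof.
move=> rm; rewrite (horner_mx_sum _ rm) mulmx_sumr -sum_e.
by apply: eq_bigr => i _; rewrite -scalemxAr e0_companion_exp ?inord_val // -ltnS.
Qed.

Lemma e0_horner_p : e 0 *m horner_mx Cp p = 0.
Proof.
have lead1 : p`_m.+1 = 1 by move: p_monic; rewrite monicE /lead_coef p_size => /eqP.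
rewrite (horner_mx_sum _ (eq_leq p_size)) big_ord_recr /= mulmxDr mulmx_sumr.
rewrite lead1 scale1r exprSr mulmxA e0_companion_exp // e_companion_last.
rewrite (eq_bigr (fun i : 'I_m.+1 => p`_i *: e i)) ?sum_e ?subrr //.
by move=> i _; rewrite -scalemxAr e0_companion_exp // -ltnS.
Qed.

Lemma companion_row0_horner (g : {poly R}) (j : 'I_m.+1) :
  horner_mx Cp g ord0 j = (g %% p)`_j.
Proof.
have rm : (size (g %% p)%R <= m.+1)%N.
  by rewrite -ltnS -p_size ltn_modp -size_poly_eq0 p_size.
have := congr1 (fun v : 'rV[R]_m.+1 => v ord0 j) (e0_horner_small rm).
rewrite [in X in _ = X]mxE => <-.
have -> : horner_mx Cp g ord0 j = (e 0 *m horner_mx Cp g) ord0 j.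
  by rewrite -rowE mxE; congr (horner_mx Cp g _ j); apply: val_inj; rewrite /= inordK.
rewrite {1}(Pdiv.IdomainMonic.divp_eq p_monic g) rmorphD /= mulmxDr.
by rewrite mulrC rmorphM /= mulmxA e0_horner_p mul0mx add0r.
Qed.

End Companion.

Lemma modp_char_poly_cong (R : idomainType) (I : R -> Prop) m (A B : 'M[R]_m.+1)
    (g : {poly R}) :
  is_ideal I -> (forall i j, I (A i j - B i j)) ->
  coef_in I (g %% char_poly A - g %% char_poly B).
Proof.
move=> hI AB j; rewrite coefB.
have rm (X : 'M[R]_m.+1) : (size (g %% char_poly X)%R <= m.+1)%N.
  by rewrite -ltnS -(size_char_poly X) ltn_modp -size_poly_eq0 size_char_poly.
case: (ltnP j m.+1) => [jm | mj]; last first.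
  by rewrite !nth_default ?(leq_trans (rm _) mj) //; apply: cong_refl.
have -> : j = Ordinal jm by [].
rewrite -!(companion_row0_horner (char_poly_monic _) (size_char_poly _)).
apply: horner_mx_cong => // i k; rewrite !mxE.
case: (nat_of_ord i == m); last exact: cong_refl.
rewrite -opprD -coefB; apply: idealN => //.
exact: char_poly_cong.
Qed.

Section MaximalIdeal.
Variables (R : comNzRingType) (M : R -> Prop).
Hypothesis hM : maximal_ideal M.

Lemma maximal_ideal_ideal : is_ideal M. Proof. by case: hM. Qed.

Lemma maximal_inv_mod z : ~ M z -> exists u v, M u /\ v * z = 1 - u.
Proof.
case: hM => hMi M1 Mmax Mz.
pose J y := exists u v, M u /\ y = u + v * z.
have hJ : is_ideal J.
  split.
  - by exists 0, 0; split; [apply: ideal0 | rewrite mul0r addr0].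
  - move=> x y [u [v [Mu ->]]] [u' [v' [Mu' ->]]].
    by exists (u + u'), (v + v'); split; [apply: idealD | rewrite mulrDl addrACA].
  - move=> a x [u [v [Mu ->]]].
    by exists (a * u), (a * v); split; [apply: idealMl | rewrite mulrDr mulrA].
case: (Mmax J hJ).
- by move=> x Mx; exists x, 0; rewrite mul0r addr0.
- by move=> JM; exfalso; apply: Mz; apply: JM; exists 0, 1; rewrite add0r mul1r; split => //; apply: ideal0.
- by move=> [u [v [Mu J1]]]; exists u, v; split => //; rewrite J1 (addrC u) addrK.
Qed.

Lemma maximal_prime a b : M (a * b) -> ~ M a -> M b.
Proof.
move=> Mab Ma; have [u [v [Mu uv]]] := maximal_inv_mod Ma.
have -> : b = u * b + v * (a * b) by rewrite mulrA uv mulrBl mul1r addrC subrK.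
have hMi := maximal_ideal_ideal.
by apply: (idealD hMi); [apply: (idealMr hMi) | apply: (idealMl hMi)].
Qed.

Lemma maximal_exp_notin s k : ~ M s -> ~ M (s ^+ k).
Proof.
move=> Ms; elim: k => [|k IH]; first by rewrite expr0; case: hM.
by rewrite exprS => /maximal_prime /(_ Ms).
Qed.

Lemma maximal_pow_primary z k x : ~ M z -> ideal_pow M k (z * x) -> ideal_pow M k x.
Proof.
move=> Mz Mzx; have [u [v [Mu uv]]] := maximal_inv_mod Mz.
have hk := ideal_pow_ideal maximal_ideal_ideal k.
have geom : (\sum_(i < k) u ^+ i) * (v * z) = 1 - u ^+ k.
  by rewrite uv -[1 - u ^+ k]opprB subrX1 -mulNr opprB mulrC.
have -> : x = u ^+ k * x + (\sum_(i < k) u ^+ i) * v * (z * x).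
  by rewrite mulrA -(mulrA _ v) geom mulrBl mul1r addrC subrK.
apply: idealD => //; last exact: idealMl.
by apply: idealMr => //; apply: ideal_pow_exp => //; apply: maximal_ideal_ideal.
Qed.

End MaximalIdeal.

Lemma classical_min (P : nat -> Prop) :
  (exists n, P n) -> exists n, P n /\ forall k, (k < n)%N -> ~ P k.
Proof.
move=> [n Pn]; elim: n {-2}n (leqnn n) Pn => [|N IH] n nN Pn.
  by exists n; split => // k kn; have := leq_trans kn nN.
case: (classic (exists k, (k < n)%N /\ P k)) => [[k [kn Pk]]|noP].
  by apply: (IH k) => //; rewrite -ltnS (leq_trans kn).
by exists n; split => // k kn Pk; apply: noP; exists k.
Qed.

Lemma noetherian_acc (R : comNzRingType) : noetherian R ->
  forall I : nat -> R -> Prop, (forall j, is_ideal (I j)) ->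
  (forall j x, I j x -> I j.+1 x) -> exists J, forall x, I J.+1 x -> I J x.
Proof.
move=> hN I hI incI.
have mono j k x : (j <= k)%N -> I j x -> I k x.
  move=> /subnK <-; elim: (k - j)%N => [//|l IH] Ix.
  by rewrite addSn; apply: incI; apply: IH.
pose U x := exists j, I j x.
have hU : is_ideal U.
  split.
  - by exists 0%N; apply: ideal0.
  - move=> x y [j Ix] [k Iy]; exists (maxn j k).
    by apply: idealD; [| exact: mono (leq_maxl j k) Ix | exact: mono (leq_maxr j k) Iy].
  - by move=> a x [j Ix]; exists j; apply: idealMl.
have [gs [Ugs Uspan]] := hN U hU.
have [J IJ] : exists J, forall i, (i < size gs)%N -> I J gs`_i.
  suff all_l l : (l <= size gs)%N -> exists J, forall i, (i < l)%N -> I J gs`_i.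
    exact: all_l.
  elim: l => [|l IH] lgs; first by exists 0%N.
  have [J IJ] := IH (ltnW lgs); have [j Ij] := Ugs l lgs.
  exists (maxn J j) => i; rewrite ltnS leq_eqVlt => /orP [/eqP ->|il].
    exact: mono (leq_maxr J j) Ij.
  exact: mono (leq_maxl J j) (IJ i il).
exists J => x IJx.
have [c [_ ->]] : in_span gs x by apply/Uspan; exists J.+1.
by apply: (ideal_sum (hI J)) => i _; apply: (idealMl (hI J)); apply: IJ (ltn_ord i).
Qed.

Lemma noetherian_ind (R : comNzRingType) : noetherian R ->
  forall P : (R -> Prop) -> Prop,
  (forall I, is_ideal I ->
     (forall J, is_ideal J -> (forall x, I x -> J x) -> (exists x, J x /\ ~ I x) -> P J) ->
     P I) ->
  forall I, is_ideal I -> P I.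
Proof.
move=> hN P HP I0 hI0; apply: NNPP => PI0.
pose T := {I : R -> Prop | is_ideal I /\ ~ P I}.
have step (t : T) : {t' : T | (forall x, sval t x -> sval t' x) /\
                              exists x, sval t' x /\ ~ sval t x}.
  case: t => [I [hI PI]]; apply: constructive_indefinite_description.
  have [J [HJ HJ']] : exists J, (is_ideal J /\ ~ P J) /\
      (forall x, I x -> J x) /\ exists x, J x /\ ~ I x.
    apply: NNPP => noJ; apply: PI; apply: HP => // J hJ IJ strict.
    by apply: NNPP => PJ; apply: noJ; exists J.
  by exists (exist _ J HJ).
pose chain := fix chain (j : nat) : T :=
  if j is j'.+1 then sval (step (chain j')) else exist _ I0 (conj hI0 PI0).
have [J HJ] := noetherian_acc hN (fun j => proj1 (svalP (chain j)))
   (fun j x => proj1 (svalP (step (chain j))) x).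
have [x [Jx nJx]] := proj2 (svalP (step (chain J))).
by apply: nJx; apply: HJ.
Qed.

Definition ideal_adjoin (R : comNzRingType) (I : R -> Prop) (w : R) : R -> Prop :=
  fun z => exists i c, I i /\ z = i + c * w.

Lemma ideal_adjoin_ideal (R : comNzRingType) (I : R -> Prop) (w : R) :
  is_ideal I -> is_ideal (ideal_adjoin I w).
Proof.
move=> hI; split.
- by exists 0, 0; split; [apply: ideal0 | rewrite mul0r addr0].
- move=> z1 z2 [i1 [c1 [I1 ->]]] [i2 [c2 [I2 ->]]].
  by exists (i1 + i2), (c1 + c2); split; [apply: idealD | rewrite mulrDl addrACA].
- move=> u z [i [c [Ii ->]]].
  by exists (u * i), (u * c); split; [apply: idealMl | rewrite mulrDr mulrA].
Qed.

Lemma ideal_adjoin_sub (R : comNzRingType) (I : R -> Prop) (w z : R) :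
  I z -> ideal_adjoin I w z.
Proof. by move=> Iz; exists z, 0; rewrite mul0r addr0. Qed.

Lemma ideal_adjoin_gen (R : comNzRingType) (I : R -> Prop) (w : R) :
  is_ideal I -> ideal_adjoin I w w.
Proof. by move=> hI; exists 0, 1; rewrite add0r mul1r; split => //; apply: ideal0. Qed.

(* Local structure of a Dedekind domain at a maximal ideal M: every nonzero
   ideal contains t * M^r for some t outside M (the local form of "every
   nonzero ideal contains a product of primes"), which yields an element
   of M^-1 outside R and, by integral closedness, a local generator of M. *)
Section DedekindLocal.
Variables (D : idomainType) (M : D -> Prop).
Hypotheses (hD : dedekind D) (hM : maximal_ideal M).

Definition Mprod_in (I : D -> Prop) (r : nat) (t : D) : Prop :=
  ~ M t /\ forall ys : seq D, size ys = r -> (forall i, (i < r)%N -> M ys`_i) ->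
     I (t * \prod_(y <- ys) y).

Lemma Mprod_in_prime (I : D -> Prop) (a : D) :
  prime_ideal I -> I a -> a != 0 -> exists r t, Mprod_in I r t.
Proof.
move=> pI Ia a0; have [_ _ prime_max] := hD; have [hMi M1 _] := hM.
have [_ _ Imax] := prime_max I pI (ex_intro _ a (conj Ia a0)).
case: (classic (exists t, I t /\ ~ M t)) => [[t [It Mt]]|IM].
  by exists 0%N, t; split => // ys /size0nil -> _; rewrite big_nil mulr1.
have IsubM x : I x -> M x by move=> Ix; apply: NNPP => Mx; apply: IM; exists x.
have MsubI : forall x, M x -> I x by case: (Imax M hMi IsubM).
exists 1%N, 1; split => // [[//|y [|//]]] _ /(_ 0%N isT) /= My.
by rewrite big_seq1 mul1r; apply: MsubI.
Qed.

Lemma Mprod_in_adjoin (I : D -> Prop) (x y : D) r1 t1 r2 t2 :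
  is_ideal I -> I (x * y) ->
  Mprod_in (ideal_adjoin I x) r1 t1 -> Mprod_in (ideal_adjoin I y) r2 t2 ->
  Mprod_in I (r1 + r2) (t1 * t2).
Proof.
move=> hI Ixy [Mt1 H1] [Mt2 H2]; split.
  by move=> Mt; apply: Mt2; apply: (maximal_prime hM Mt Mt1).
move=> ys ys_size Mys.
have [i1 [c1 [Ii1 E1]]] : ideal_adjoin I x (t1 * \prod_(y <- take r1 ys) y).
  apply: H1; first by rewrite size_takel // ys_size leq_addr.
  by move=> i ir; rewrite nth_take //; apply: Mys; rewrite (leq_trans ir) ?leq_addr.
have [i2 [c2 [Ii2 E2]]] : ideal_adjoin I y (t2 * \prod_(y <- drop r1 ys) y).
  apply: H2; first by rewrite size_drop ys_size addKn.
  by move=> i ir; rewrite nth_drop; apply: Mys; rewrite ltn_add2l.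
have -> : t1 * t2 * \prod_(y <- ys) y =
    (t1 * \prod_(y <- take r1 ys) y) * (t2 * \prod_(y <- drop r1 ys) y).
  by rewrite -{1}(cat_take_drop r1 ys) big_cat /=; ring.
rewrite E1 E2.
have -> : (i1 + c1 * x) * (i2 + c2 * y) =
    i1 * (i2 + c2 * y) + (c1 * x) * i2 + (c1 * c2) * (x * y) by ring.
by apply: idealD => //; [apply: idealD => //; [apply: idealMr | apply: idealMl] | apply: idealMl].
Qed.

Lemma Mprod_in_nonzero (a : D) : a != 0 ->
  forall I, is_ideal I -> I a -> exists r t, Mprod_in I r t.
Proof.
move=> a0; have [hN _ _] := hD.
apply: (noetherian_ind hN (P := fun I => I a -> exists r t, Mprod_in I r t)).
move=> I hI IH Ia.
case: (classic (I 1)) => [I1|I1].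
  by exists 0%N, 1; split => // [|ys /size0nil -> _]; [case: hM | rewrite big_nil mulr1].
case: (classic (prime_ideal I)) => [pI|npI]; first exact: Mprod_in_prime pI Ia a0.
have [x [y [Ixy [Ix Iy]]]] : exists x y, I (x * y) /\ ~ I x /\ ~ I y.
  apply: NNPP => noxy; apply: npI; split => // u v Iuv.
  by apply: NNPP => uv; apply: noxy; exists u, v; split => //; split => [Iu|Iv]; apply: uv; [left | right].
have adjoin_IH w : ~ I w -> exists r t, Mprod_in (ideal_adjoin I w) r t.
  move=> Iw; apply: IH; [exact: ideal_adjoin_ideal | exact: ideal_adjoin_sub | |].
  - by exists w; split => //; apply: ideal_adjoin_gen.
  - exact: ideal_adjoin_sub.
have [r1 [t1 H1]] := adjoin_IH x Ix; have [r2 [t2 H2]] := adjoin_IH y Iy.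
by exists (r1 + r2)%N, (t1 * t2); apply: Mprod_in_adjoin H1 H2.
Qed.

(* An element b/a of M^-1 (b M in aR) that is not in R. *)
Lemma exists_inverse_fraction (a : D) : a != 0 -> M a ->
  exists b, (forall m, M m -> exists w, b * m = a * w) /\ ~ exists w, b = a * w.
Proof.
move=> a0 Ma; have [hMi _ _] := hM.
pose aD z := exists w, z = a * w.
have haD : is_ideal aD.
  split.
  - by exists 0; rewrite mulr0.
  - by move=> x y [w ->] [w' ->]; exists (w + w'); rewrite mulrDr.
  - by move=> c x [w ->]; exists (c * w); rewrite mulrCA.
have [r0 [[t0 Ht0] rmin]] :=
  classical_min (Mprod_in_nonzero a0 haD (ex_intro _ 1 (esym (mulr1 a)))).
case: r0 Ht0 rmin => [|r] [Mt Ht] rmin.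
  have [w tw] := Ht [::] erefl (fun i (i0 : (i < 0)%N) => False_ind _ (notF i0)).
  by move: tw; rewrite big_nil mulr1 => tw; exfalso; apply: Mt; rewrite tw; apply: (idealMr hMi).
have [ys [ys_size [Mys notin]]] : exists ys : seq D, size ys = r /\
    (forall i, (i < r)%N -> M ys`_i) /\ ~ aD (t0 * \prod_(y <- ys) y).
  apply: NNPP => noys; apply: (rmin r (ltnSn r)); exists t0; split => // ys ys_size Mys.
  by apply: NNPP => notin; apply: noys; exists ys.
exists (t0 * \prod_(y <- ys) y); split => // m Mm.
have := Ht (rcons ys m); rewrite size_rcons ys_size -cats1 big_cat big_seq1 /= mulrA.
apply=> // i ir; rewrite nth_cat ys_size; case: ltnP => ri; first exact: Mys.
have -> : i = r by apply/eqP; rewrite eqn_leq ri -ltnS ir.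
by rewrite subnn.
Qed.

End DedekindLocal.

(* Determinant trick: a fraction b/a with (b/a) M in M, for a finitely
   generated M containing a != 0, is an eigenvalue of an integer matrix,
   hence integral, hence in R when R is integrally closed. *)
Lemma stabilizing_fraction_integral (D : idomainType) (M : D -> Prop) :
  noetherian D -> integrally_closed D -> is_ideal M ->
  forall a b, a != 0 -> M a -> (forall y, M y -> exists w, M w /\ b * y = a * w) ->
  exists e, b = a * e.
Proof.
move=> hN hIC hMi a b a0 Ma bM.
have [gs [Mgs Mspan]] := hN M hMi; pose l := size gs.
have : forall i : 'I_l, exists c : seq D, b * gs`_i = a * \sum_(j < l) c`_j * gs`_j.
  move=> i; have [w [Mw ->]] := bM _ (Mgs i (ltn_ord i)).
  by have [c [_ ->]] := (Mspan w).1 Mw; exists c.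
move=> /fin_all_exists [f Hf].
pose Cf : 'M[D]_l := \matrix_(i, j) (f i)`_j.
pose A := map_mx (@tofrac D) Cf^T.
pose x : {fraction D} := tofrac b / tofrac a.
pose v : 'rV[{fraction D}]_l := \row_j tofrac gs`_j.
have a0F : tofrac a != 0 by rewrite tofrac_eq0.
have eig : v *m A = x *: v.
  apply/rowP => i; rewrite !mxE.
  have := congr1 (@tofrac D) (Hf i); rewrite !rmorphM /= rmorph_sum /= => E.
  rewrite /x mulrAC E mulrAC mulfV // mul1r.
  by apply: eq_bigr => j _; rewrite !mxE rmorphM /= mulrC.
have v0 : v != 0.
  apply/negP => /eqP v0; move: a0 => /negP; apply.
  have [c [_ ->]] := (Mspan a).1 Ma.
  apply/eqP; apply: big1 => j _.
  have := congr1 (fun u : 'rV__ => u ord0 j) v0; rewrite !mxE => /eqP.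
  by rewrite tofrac_eq0 => /eqP ->; rewrite mulr0.
have x_root : root (char_poly A) x.
  by rewrite -eigenvalue_root_char; apply/eigenvalueP; exists v.
have [e xe] : exists e, x = tofrac e.
  by apply: (hIC x (char_poly Cf^T) (char_poly_monic _)); rewrite map_char_poly.
by exists e; apply/eqP; rewrite -tofrac_eq rmorphM /= -xe /x mulrCA mulfV // mulr1.
Qed.

Lemma maximal_locally_principal (D : idomainType) (M : D -> Prop) :
  dedekind D -> maximal_ideal M ->
  exists pi s, M pi /\ ~ M s /\ forall y, M y -> exists w, s * y = pi * w.
Proof.
move=> hD hM; have [hMi M1 _] := hM; have [hN hIC _] := hD.
case: (classic (exists a, M a /\ a != 0)) => [[a [Ma a0]] | M0]; last first.
  exists 0, 1; split; first exact: ideal0.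
  split => // y My; exists 0; rewrite mul1r mul0r.
  by apply/eqP; apply: NNPP => y0; apply: M0; exists y; split => //; apply/negP.
have [b [bM bnotin]] := exists_inverse_fraction hD hM a0 Ma.
case: (classic (exists m w, M m /\ b * m = a * w /\ ~ M w)) => [|bMM].
  move=> [pi [s [Mpi [bpi Ms]]]]; exists pi, s; split => //; split => // y My.
  have [w bw] := bM y My; exists w; apply: (mulfI a0).
  by rewrite mulrA -bpi mulrAC bw; ring.
exfalso; apply: bnotin; apply: (stabilizing_fraction_integral hN hIC hMi a0 Ma).
move=> y My; have [w bw] := bM y My; exists w; split => //.
by apply: NNPP => Mw; apply: bMM; exists y, w.
Qed.

(* With a local generator pi of M (s M in pi R, s outside M), membership in
   M^j is divisibility by pi^j after clearing a power of s.  Noetherianity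
   bounds the M-adic order of any d != 0, so dividing by d loses at most a
   fixed number e of M-adic orders. *)
Section LocalGenerator.
Variables (D : idomainType) (M : D -> Prop) (pi s : D).
Hypotheses (hM : maximal_ideal M) (Mpi : M pi) (Ms : ~ M s).
Hypothesis s_pi : forall y, M y -> exists w, s * y = pi * w.

(* y lies in pi^j R_M. *)
Definition pi_div (j : nat) (y : D) : Prop := exists w, s ^+ j * y = pi ^+ j * w.

Let hMi : is_ideal M := maximal_ideal_ideal hM.

Lemma pi_div_ideal j : is_ideal (pi_div j).
Proof.
split.
- by exists 0; rewrite !mulr0.
- by move=> y1 y2 [w1 E1] [w2 E2]; exists (w1 + w2); rewrite !mulrDr E1 E2.
- by move=> u y [w E]; exists (u * w); rewrite mulrCA E mulrCA.
Qed.

Lemma ideal_pow_pi_div j y : ideal_pow M j y -> pi_div j y.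
Proof.
elim: j y => [|j IH] y; first by exists y; rewrite expr0 !mul1r.
move=> [a [b [sab Ma Mb ->]]]; apply: (ideal_sum (pi_div_ideal j.+1)) => i _.
have [u au] := s_pi (Ma i (ltn_ord i)); have [v bv] := IH _ (Mb i (ltn_ord i)).
exists (u * v); rewrite !exprS.
by transitivity ((s * a`_i) * (s ^+ j * b`_i)); [ring | rewrite au bv; ring].
Qed.

Lemma pi_div_ideal_pow j y : pi_div j y -> ideal_pow M j y.
Proof.
move=> [w E]; apply: (maximal_pow_primary hM (maximal_exp_notin hM (k := j) Ms)).
by rewrite E; apply: (idealMr (ideal_pow_ideal hMi j)); apply: ideal_pow_exp.
Qed.

(* Krull's intersection theorem, in local form: a nonzero element is not
   divisible by all powers of pi. *)
Lemma pi_div_bounded (d : D) : noetherian D -> d != 0 -> exists e, ~ pi_div e d.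
Proof.
move=> hN d0; have s0 : s != 0 by apply: contra_notN Ms => /eqP ->; apply: ideal0.
pose E j y := exists m c, pi ^+ j * (s ^+ m * y) = c * (s ^+ j * d).
have hE j : is_ideal (E j).
  split.
  - by exists 0%N, 0; rewrite !mulr0 mul0r.
  - move=> y1 y2 [m1 [c1 E1]] [m2 [c2 E2]].
    exists (m1 + m2)%N, (s ^+ m2 * c1 + s ^+ m1 * c2).
    transitivity (s ^+ m2 * (pi ^+ j * (s ^+ m1 * y1)) + s ^+ m1 * (pi ^+ j * (s ^+ m2 * y2))).
      by rewrite exprD; ring.
    by rewrite E1 E2; ring.
  - move=> u y [m [c Ey]]; exists m, (u * c).
    by transitivity (u * (pi ^+ j * (s ^+ m * y))); [ring | rewrite Ey; ring].
have incE j y : E j y -> E j.+1 y.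
  move=> [m [c Ey]]; exists m.+1, (c * pi).
  by rewrite !exprS; transitivity (pi * s * (pi ^+ j * (s ^+ m * y))); [ring | rewrite Ey; ring].
have [J EJ] := noetherian_acc hN hE incE.
exists J.+1 => [[w Ew]].
have w_ne0 : pi ^+ J.+1 * w != 0 by rewrite -Ew mulf_neq0 // expf_neq0.
have [m [c Ec]] : E J w by apply: EJ; exists 0%N, 1; rewrite expr0 !mul1r Ew.
apply: (maximal_exp_notin hM (k := m.+1) Ms); have -> : s ^+ m.+1 = c * pi.
  apply: (mulIf w_ne0); rewrite -[in RHS]Ew.
  transitivity (pi * s * (pi ^+ J * (s ^+ m * w))); first by rewrite !exprS; ring.
  by rewrite Ec !exprS; ring.
exact: idealMl.
Qed.

Lemma pi_order (d : D) : noetherian D -> d != 0 ->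
  exists e u, ~ M u /\ s ^+ e * d = pi ^+ e * u.
Proof.
move=> hN d0; have [e] := pi_div_bounded hN d0.
elim: e => [|e IH] nde; first by exfalso; apply: nde; exists d; rewrite expr0 !mul1r.
case: (classic (pi_div e d)) => [[u Eu]|]; last exact: IH.
exists e, u; split => // Mu; apply: nde.
have [w Ew] := s_pi Mu; exists w.
by rewrite exprS -mulrA Eu mulrCA Ew mulrA -exprSr.
Qed.

Lemma bounded_order_loss_at (d : D) : noetherian D -> d != 0 ->
  exists e, forall k x, ideal_pow M (k + e) (d * x) -> ideal_pow M k x.
Proof.
move=> hN d0; have [e [u [Mu Eu]]] := pi_order hN d0.
have s0 : s != 0 by apply: contra_notN Ms => /eqP ->; apply: ideal0.
exists e => k x /ideal_pow_pi_div [w Ew].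
apply: (maximal_pow_primary hM Mu); apply: pi_div_ideal_pow; exists w.
apply: (mulfI (_ : s ^+ e * d != 0)); first by rewrite mulf_neq0 // expf_neq0.
transitivity (s ^+ (k + e) * (d * x) * u); first by rewrite exprD; ring.
by rewrite Ew Eu exprD; ring.
Qed.

End LocalGenerator.

Lemma bounded_order_loss (D : idomainType) (M : D -> Prop) (d : D) :
  dedekind D -> maximal_ideal M -> d != 0 ->
  exists e, forall k x, ideal_pow M (k + e) (d * x) -> ideal_pow M k x.
Proof.
move=> hD hM d0; have [hN _ _] := hD.
have [pi [s [Mpi [Ms s_pi]]]] := maximal_locally_principal hD hM.
exact: (bounded_order_loss_at hM Mpi Ms s_pi hN d0).
Qed.

(* Evaluating an integer-valued f = g/d at the companion matrix of a monic
   chi shows, via its first row, that d divides every coefficient of g mod chi. *)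
Lemma int_valued_remainder (D : idomainType) (m : nat) (g : {poly D}) (d : D) :
  d != 0 -> int_valued_mx m.+1 ((tofrac d)^-1 *: map_poly (@tofrac D) g) ->
  forall chi : {poly D}, chi \is monic -> size chi = m.+2 ->
  exists t : {poly D}, g %% chi == d *: t.
Proof.
move=> d0 hf chi chi_monic chi_size.
have [B gB] := hf (companion m chi).
rewrite mx_evalE horner_mxZ -map_horner_mx /= in gB.
have dF : tofrac d != 0 by rewrite tofrac_eq0.
have coefB (j : 'I_m.+1) : (g %% chi)`_j = d * B ord0 j.
  rewrite -(companion_row0_horner chi_monic chi_size); apply/eqP; rewrite -tofrac_eq.
  have := congr1 (fun X : 'M__ => X ord0 j) gB; rewrite !mxE => E.
  by rewrite rmorphM /= -E mulrA mulfV // mul1r.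
have r_size : (size (g %% chi)%R <= m.+1)%N.
  by rewrite -ltnS -chi_size ltn_modp -size_poly_eq0 chi_size.
exists (\poly_(j < m.+1) B ord0 (inord j)); apply/eqP/polyP => j.
rewrite coefZ coef_poly; case: ltnP => jm; first by rewrite -{1}(inordK jm) coefB.
by rewrite mulr0 nth_default // (leq_trans r_size jm).
Qed.

(* Main theorem. *)
Theorem mainTheorem6 (D : idomainType) (M : D -> Prop) (n : nat)
    (hD : dedekind D) (hM : maximal_ideal M) (hfin : finite_index M)
    (hn : (1 <= n)%N)
    (g : {poly D}) (d : D) (hd : d != 0)
    (hf : int_valued_mx n ((tofrac d)^-1 *: map_poly (@tofrac D) g))
    (C : nat -> 'M[D]_n) (hC : completion_mx M C) :
  exists (N : nat) (s : nat -> {poly D}),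
    completion_poly M N s /\
    forall k (i j : 'I_n),
      ideal_pow M k (mx_eval g (C k) i j - d * mx_eval (s k) (C k) i j).
Proof.
case: n hn hf C hC => [//|m] _ hf C hC.
have hMi := maximal_ideal_ideal hM; have hMk := ideal_pow_ideal hMi.
pose r k := g %% char_poly (C k).
have r_coh k l : ideal_pow M k ((r k.+1)`_l - (r k)`_l).
  by rewrite -coefB; apply: modp_char_poly_cong => //; apply: hC.
have hdiv k : exists t, r k == d *: t.
  exact: (int_valued_remainder hd hf (char_poly_monic (C k)) (size_char_poly (C k))).
pose t k := xchoose (hdiv k).
have rE k : r k = d *: t k by apply/eqP; apply: (xchooseP (hdiv k)).
have [e He] := bounded_order_loss hD hM hd.
exists m.+1, (fun k => t (k + e)); split; first split.
- move=> k; rewrite -(size_scale _ hd) -rE -ltnS -(size_char_poly (C (k + e))).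
  by rewrite ltn_modp -size_poly_eq0 size_char_poly.
- by move=> k l; apply: He; rewrite mulrBr -!coefZ -!rE; apply: (r_coh (k + e)%N).
- move=> k i j; rewrite !mx_evalE -horner_mx_modp_char -/(r k).
  have -> : d * horner_mx (C k) (t (k + e)) i j = horner_mx (C k) (r (k + e)) i j.
    by rewrite rE horner_mxZ mxE.
  have -> : forall A B : 'M[D]_m.+1, A i j - B i j = (A - B) i j.
    by move=> A B; rewrite !mxE.
  rewrite -rmorphB /=.
  apply: horner_mx_in => // l; rewrite coefB -opprB; apply: idealN => //.
  exact: (coherent_diff hMi (x := fun q => (r q)`_l) (r_coh ^~ l) (leq_addr e k)).
Qed.
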